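(* Let $M$ be a sharp, integral monoid and $\phi:\Gamma\to\Gamma'$ a harmonic, non-degenerate morphism of $M$-metrised graphs. Then for every effective divisor $D'\in\operatorname{Div}(\Gamma')$ we have $r(\phi^*(D'))\ge r(D')$.
   Context: Monoids are commutative, sharp (only unit $0$), integral (cancellative), with groupification $M^{gp}$; $\langle m\rangle=\{km:k\in\mathbb Z\}\subseteq M^{gp}$ and for $x=km$, $m\ne0$, $x/m:=k$. A graph is $(X,r,i)$, $X$ finite, $r$ idempotent, $i$ an involution, $i(x)=x\iff r(x)=x$; vertices $V$ = fixed points, half-edges $H=X\setminus V$, edges $\{e,i(e)\}$ joining $r(e),r(i(e))$, $H_v=\{e\in H:r(e)=v\}$; graphs are connected. An $M$-metrised graph adds $l:X\to M$ with $l(i(x))=l(x)$, $l(x)=0\iff x\in V$. Divisors: elements of the free abelian group on $V$, partially ordered pointwise; $\operatorname{Div}^k_+$ = effective divisors of degree $k$. $\operatorname{PL}(\Gamma)=\{g:V\to M^{gp}: g(r(e))-g(r(i(e)))\in\langle l(e)\rangle\ \forall e\in H\}$; $\Delta(g)=\sum_{v}\big(\sum_{e\in H_v}\frac{g(v)-g(r(i(e)))}{l(e)}\big)[v]$; principal divisors $\operatorname{Prin}(\Gamma)=\Delta(\operatorname{PL}(\Gamma))$; $D\sim D'$ iff $D-D'\in\operatorname{Prin}(\Gamma)$; $|D|=\{E\ge0: E\sim D\}$; rank $r(D)=\max\{k\in\mathbb Z:|D-F|\ne\emptyset\text{ for all }F\in\operatorname{Div}^k_+(\Gamma)\}$. A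 morphism $\phi:\Gamma\to\Gamma'$ is a map $X\to X'$ with $\phi(V)\subseteq V'$; if $\phi(e)=e'\in H'$ then $\phi(r(e))=r'(e')$, $\phi(r(i(e)))=r'(i'(e'))$, $l'(e')\in\langle l(e)\rangle$; if $\phi(e)=v'\in V'$ then $\phi(r(e))=\phi(r(i(e)))=v'$. Slope $\mu_\phi(e)=l'(\phi(e))/l(e)$ if $\phi(e)\in H'$, else $0$; $m_{\phi,v}(e')=\sum_{e\in H_v,\phi(e)=e'}\mu_\phi(e)$ for $e'\in H'_{\phi(v)}$; harmonic: independent of $e'$ for each $v$, common value $m_\phi(v)$; non-degenerate: $m_\phi(v)>0$ for all $v$. $\phi^*(D')=\sum_{v}D'(\phi(v))m_\phi(v)[v]$. *)

From HB Require Import structures.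
From mathcomp Require Import all_boot all_order all_algebra.
From Stdlib Require Import ClassicalEpsilon.
Set Implicit Arguments. Unset Strict Implicit. Unset Printing Implicit Defensive.
Import Order.TTheory GRing.Theory Num.Theory.
Local Open Scope ring_scope.

(* ---------- Monoids ----------
   A sharp, integral (cancellative), commutative monoid M is represented by
   its image inside its groupification M^gp = G : a predicate M on an abelian
   group G which contains 0, is closed under +, is sharp (only unit 0),
   and generates G (every element of G is a difference of elements of M). *)
Definition sharp_integral_monoid (G : zmodType) (M : G -> Prop) : Prop :=
  [/\ M 0,
      (forall a b, M a -> M b -> M (a + b)),
      (forall a b, M a -> M b -> a + b = 0 -> a = 0) &
      (forall x, exists a b, [/\ M a, M b & x = a - b])].

(* x / m := the k with x = k m (in <m>), and 0 if there is no such k.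
   (For m in M \ {0} such a k is unique.) *)
Definition qdiv (G : zmodType) (x m : G) : int :=
  match excluded_middle_informative (exists k : int, x = m *~ k) with
  | left H => proj1_sig (constructive_indefinite_description _ H)
  | right _ => 0
  end.

Record mgraph (G : zmodType) := MGraph {
  gX : finType;
  gr : gX -> gX;
  gi : gX -> gX;
  gl : gX -> G }.

Arguments gr {G}.
Arguments gi {G}.
Arguments gl {G}.

Section Graphs.
Variable G : zmodType.
Implicit Type Gm : mgraph G.

Definition isV Gm (x : gX Gm) : bool := gr Gm x == x.

Definition adj Gm : rel (gX Gm) :=
  fun x y => [|| y == gr Gm x, x == gr Gm y | y == gi Gm x].

Definition Mmetrised (M : G -> Prop) Gm : Prop :=
  [/\ (forall x, gr Gm (gr Gm x) = gr Gm x),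
      (forall x, gi Gm (gi Gm x) = x),
      (forall x, gi Gm x = x <-> gr Gm x = x),
      (0 < #|gX Gm|)%N &
      (forall x y, connect (@adj Gm) x y)] /\
  [/\ (forall x, M (gl Gm x)),
      (forall x, gl Gm (gi Gm x) = gl Gm x) &
      (forall x, gl Gm x = 0 <-> isV x)].

Definition isDiv Gm (D : gX Gm -> int) : Prop := forall x, ~~ isV x -> D x = 0.
Definition effective Gm (D : gX Gm -> int) : Prop := forall x, 0 <= D x.
Definition degree Gm (D : gX Gm -> int) : int := \sum_(x : gX Gm | isV x) D x.

Definition isPL Gm (g : gX Gm -> G) : Prop :=
  forall e, ~~ isV e ->
    exists k : int, g (gr Gm e) - g (gr Gm (gi Gm e)) = gl Gm e *~ k.

Definition Lap Gm (g : gX Gm -> G) (x : gX Gm) : int :=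
  if isV x then
    \sum_(e : gX Gm | (gr Gm e == x) && ~~ isV e)
       qdiv (g x - g (gr Gm (gi Gm e))) (gl Gm e)
  else 0.

Definition isPrin Gm (D : gX Gm -> int) : Prop :=
  exists g : gX Gm -> G, isPL g /\ forall x, D x = Lap g x.

Definition linsys_nonempty Gm (D : gX Gm -> int) : Prop :=
  exists E : gX Gm -> int, [/\ isDiv E, effective E & isPrin (fun x => E x - D x)].

Definition rank_ok Gm (D : gX Gm -> int) (k : int) : Prop :=
  forall F : gX Gm -> int, isDiv F -> effective F -> degree F = k ->
    linsys_nonempty (fun x => D x - F x).

Definition is_rank Gm (D : gX Gm -> int) (n : int) : Prop :=
  rank_ok D n /\ forall k, rank_ok D k -> k <= n.

Definition is_morphism Gm Gm' (phi : gX Gm -> gX Gm') : Prop :=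
  (forall v, isV v -> isV (phi v)) /\
  forall e, ~~ isV e ->
    (~~ isV (phi e) ->
       [/\ phi (gr Gm e) = gr Gm' (phi e),
           phi (gr Gm (gi Gm e)) = gr Gm' (gi Gm' (phi e)) &
           exists k : int, gl Gm' (phi e) = gl Gm e *~ k]) /\
    (isV (phi e) ->
       phi (gr Gm e) = phi e /\ phi (gr Gm (gi Gm e)) = phi e).

Definition slope Gm Gm' (phi : gX Gm -> gX Gm') (e : gX Gm) : int :=
  if ~~ isV (phi e) then qdiv (gl Gm' (phi e)) (gl Gm e) else 0.

Definition mloc Gm Gm' (phi : gX Gm -> gX Gm') (v : gX Gm) (e' : gX Gm') : int :=
  \sum_(e : gX Gm | [&& gr Gm e == v, ~~ isV e & phi e == e']) slope phi e.

Definition harmonic Gm Gm' (phi : gX Gm -> gX Gm') : Prop :=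
  forall v, isV v -> forall e1 e2,
    gr Gm' e1 = phi v -> ~~ isV e1 -> gr Gm' e2 = phi v -> ~~ isV e2 ->
    mloc phi v e1 = mloc phi v e2.

(* m_phi(v): the common value (computed at some half-edge at phi(v));
   convention 1 if H'_{phi(v)} is empty (only when Gm' is a single point). *)
Definition mult Gm Gm' (phi : gX Gm -> gX Gm') (v : gX Gm) : int :=
  match [pick e' | (gr Gm' e' == phi v) && ~~ isV e'] with
  | Some e' => mloc phi v e'
  | None => 1
  end.

Definition non_degenerate Gm Gm' (phi : gX Gm -> gX Gm') : Prop :=
  forall v, isV v -> 0 < mult phi v.

Definition pullback Gm Gm' (phi : gX Gm -> gX Gm') (D' : gX Gm' -> int)
  (x : gX Gm) : int :=
  if isV x then D' (phi x) * mult phi x else 0.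

End Graphs.

(* Ranks exist because principal divisors have degree 0, which bounds the rank
   by the degree.  For the inequality, push an effective divisor F of degree k
   on Gm forward to Gm'; if E' lies in |D' - phi_* F|, then
   phi^* E' + (phi^* phi_* F - F) lies in |phi^* D' - F|: it is effective because
   non-degeneracy gives phi^* phi_* F >= F, and pulling back preserves linear
   equivalence because, by harmonicity, phi^* (Lap g) = Lap (g o phi). *)

From mathcomp Require Import all_boot all_order all_algebra.
From mathcomp Require Import zify.
From Stdlib Require Import ClassicalEpsilon.
Set Implicit Arguments. Unset Strict Implicit. Unset Printing Implicit Defensive.
Import Order.TTheory GRing.Theory Num.Theory.
Local Open Scope ring_scope.

Lemma int_max_exists (P : int -> Prop) (k0 B : int) :
  P k0 -> (forall k, P k -> k <= B) -> exists n, P n /\ forall k, P k -> k <= n.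
Proof.
move=> Pk0 PB.
pose p (i : nat) : bool :=
  if excluded_middle_informative (P (k0 + i%:Z)) then true else false.
have pP i : reflect (P (k0 + i%:Z)) (p i).
  by rewrite /p; case: excluded_middle_informative; constructor.
have p0 : exists i, p i by exists 0%N; apply/pP; rewrite addr0.
have pB i : p i -> (i <= `|B - k0|)%N by move/pP/PB; lia.
case: (ex_maxnP p0 pB) => i /pP Pi imax.
exists (k0 + i%:Z); split=> // k Pk.
have [kk0|k0k] := ltP k k0; first lia.
have /imax : p `|k - k0|%N by apply/pP; have -> : k0 + `|k - k0|%N%:Z = k by lia.
lia.
Qed.

Section SharpMonoid.
Variables (G : zmodType) (M : G -> Prop) (HM : sharp_integral_monoid M).

Lemma M_mulrn m n : M m -> M (m *+ n).
Proof.
case: HM => M0 MD _ _ Mm; elim: n => [|n IHn]; first by rewrite mulr0n.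
by rewrite mulrS; apply: MD.
Qed.

(* Sharpness forces [m *+ n.+1 = m + m *+ n] to be nonzero. *)
Lemma M_mulrz_eq0 m z : M m -> m != 0 -> m *~ z = 0 -> z = 0.
Proof.
move=> Mm m0.
have mulrSn_neq0 n : m *+ n.+1 <> 0.
  case: HM => _ _ Msharp _; rewrite mulrS => /(Msharp _ _ Mm (M_mulrn n Mm)) m_0.
  by rewrite m_0 eqxx in m0.
case: z => [[|n]|n] //; first by move/mulrSn_neq0.
by rewrite NegzE mulrNz => /eqP; rewrite oppr_eq0 => /eqP /mulrSn_neq0.
Qed.

Lemma qdivE x m k : M m -> m != 0 -> x = m *~ k -> qdiv x m = k.
Proof.
move=> Mm m0 xE; rewrite /qdiv; case: excluded_middle_informative => [ex|];
  last by case; exists k.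
case: constructive_indefinite_description => k' /= xE'.
apply/eqP; rewrite eq_sym -subr_eq0; apply/eqP; apply: (M_mulrz_eq0 Mm m0).
by rewrite mulrzBr -xE' -xE subrr.
Qed.

End SharpMonoid.

Definition outslope (G : zmodType) (Gm : mgraph G) (g : gX Gm -> G) (e : gX Gm) : int :=
  qdiv (g (gr Gm e) - g (gr Gm (gi Gm e))) (gl Gm e).

Lemma LapE (G : zmodType) (Gm : mgraph G) (g : gX Gm -> G) x :
  Lap g x = if isV x then \sum_(e | (gr Gm e == x) && ~~ isV e) outslope g e else 0.
Proof.
rewrite /Lap; case: ifP => // _.
by apply: eq_big => // e /andP[/eqP <- _].
Qed.

Section MetrisedGraph.
Variables (G : zmodType) (M : G -> Prop) (HM : sharp_integral_monoid M).
Variables (Gm : mgraph G) (HGm : Mmetrised M Gm).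

Lemma isV_gr x : isV (gr Gm x).
Proof. by case: HGm => [[grK _ _ _ _] _]; rewrite /isV grK. Qed.

Lemma giK : involutive (gi Gm).
Proof. by case: HGm => [[_ giK _ _ _] _]. Qed.

Lemma isV_gi x : isV (gi Gm x) = isV x.
Proof.
case: HGm => [[_ _ gi_fix _ _] _]; rewrite /isV.
apply/eqP/eqP => [/gi_fix | /gi_fix xE]; last by apply/gi_fix; rewrite giK xE.
by rewrite giK => xE; apply/gi_fix; rewrite {1}xE giK.
Qed.

Lemma M_gl x : M (gl Gm x).
Proof. by case: HGm => [_ [Ml _ _]]. Qed.

Lemma gl_gi x : gl Gm (gi Gm x) = gl Gm x.
Proof. by case: HGm => [_ [_ l_gi _]]. Qed.

Lemma gl_neq0 x : ~~ isV x -> gl Gm x != 0.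
Proof. by case: HGm => [_ [_ _ l_eq0]] xE; apply/eqP => /l_eq0; apply/negP. Qed.

Lemma qdiv_gl y x k : ~~ isV x -> y = gl Gm x *~ k -> qdiv y (gl Gm x) = k.
Proof. by move=> xE; apply: (qdivE HM (M_gl x) (gl_neq0 xE)). Qed.

Lemma outslope_gi (g : gX Gm -> G) e :
  isPL g -> ~~ isV e -> outslope g (gi Gm e) = - outslope g e.
Proof.
move=> PLg eE; have [k gE] := PLg e eE.
rewrite /outslope (qdiv_gl eE gE) giK gl_gi; apply: qdiv_gl => //.
by rewrite mulrNz -gE opprB.
Qed.

Lemma degreeB (D E : gX Gm -> int) :
  degree (fun x => D x - E x) = degree D - degree E.
Proof. by rewrite /degree big_split /= sumrN. Qed.

Lemma degree_ge0 (D : gX Gm -> int) : effective D -> 0 <= degree D.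
Proof. by move=> D_ge0; apply: sumr_ge0 => x _; apply: D_ge0. Qed.

(* Each edge [{e, gi e}] contributes opposite slopes at its two ends. *)
Lemma degree_Lap (g : gX Gm -> G) : isPL g -> degree (Lap g) = 0.
Proof.
move=> PLg.
have -> : degree (Lap g) = \sum_(e | ~~ isV e) outslope g e.
  rewrite [RHS](partition_big (gr Gm) (fun x : gX Gm => isV x)) /=;
    last by move=> e _; apply: isV_gr.
  apply: eq_bigr => x xV; rewrite LapE xV.
  by apply: eq_bigl => e; rewrite andbC.
set S := \sum_(e | ~~ isV e) _.
suff : S = - S by lia.
rewrite {1}/S (reindex_inj (can_inj giK)) /= -sumrN.
by apply: eq_big => [e|e eE]; rewrite ?isV_gi // outslope_gi // -isV_gi.
Qed.

Lemma degree_isPrin (D E : gX Gm -> int) :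
  isPrin (fun x => E x - D x) -> degree E = degree D.
Proof.
case=> g [PLg EDE]; apply/eqP; rewrite -subr_eq0 -degreeB -(degree_Lap PLg).
by apply/eqP; apply: eq_bigr => x _; rewrite EDE.
Qed.

Lemma degree_point v k : isV v -> degree (fun x : gX Gm => if x == v then k else 0) = k.
Proof.
move=> vV; rewrite /degree (bigD1 v) //= eqxx big1 ?addr0 //.
by move=> x /andP[_ /negbTE ->].
Qed.

Lemma rank_ok_le_degree (D : gX Gm -> int) k :
  rank_ok D k -> k <= Num.max (degree D) 0.
Proof.
move=> Dk; rewrite le_max.
have [k_lt0|k_ge0] := ltP k 0; first by rewrite (ltW k_lt0) orbT.
have [v vV] : exists v : gX Gm, isV v.
  by case: HGm => [[_ _ _ /card_gt0P[x _] _] _]; exists (gr Gm x); apply: isV_gr.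
have [||| E [_ E_ge0 DE]] := Dk (fun x => if x == v then k else 0).
- by move=> x; case: eqP => // ->; rewrite vV.
- by move=> x; case: eqP.
- exact: degree_point.
have := degree_ge0 E_ge0.
by rewrite (degree_isPrin DE) degreeB degree_point // subr_ge0 => ->.
Qed.

Lemma rank_exists (D : gX Gm -> int) : exists n, is_rank D n.
Proof.
apply: (@int_max_exists _ (-1) _ _ (@rank_ok_le_degree D)).
by move=> F _ F_ge0 degF; have := degree_ge0 F_ge0; rewrite degF.
Qed.

Lemma linsys_nonempty_le (D D2 : gX Gm -> int) :
  (forall x, D x <= D2 x) -> (forall x, ~~ isV x -> D2 x = D x) ->
  linsys_nonempty D -> linsys_nonempty D2.
Proof.
move=> DD2 D2E [E [Ediv E_ge0 [g [PLg EDE]]]].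
exists (fun x => E x + (D2 x - D x)); split.
- by move=> x xE; rewrite Ediv // D2E // subrr addr0.
- by move=> x; rewrite addr_ge0 ?subr_ge0.
- by exists g; split=> // x; rewrite -EDE; lia.
Qed.

End MetrisedGraph.

Definition pushforward (G : zmodType) (Gm Gm' : mgraph G) (phi : gX Gm -> gX Gm')
  (D : gX Gm -> int) (y : gX Gm') : int :=
  if isV y then \sum_(x | isV x && (phi x == y)) D x else 0.

Section Pullback.
Variables (G : zmodType) (M : G -> Prop) (HM : sharp_integral_monoid M).
Variables (Gm Gm' : mgraph G) (HGm : Mmetrised M Gm) (HGm' : Mmetrised M Gm').
Variables (phi : gX Gm -> gX Gm') (Hphi : is_morphism phi).
Hypotheses (Hharm : harmonic phi) (Hnd : non_degenerate phi).

Lemma isV_phi v : isV v -> isV (phi v).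
Proof. by case: Hphi => phiV _; apply: phiV. Qed.

Lemma mult_mloc v e' : isV v -> gr Gm' e' = phi v -> ~~ isV e' ->
  mult phi v = mloc phi v e'.
Proof.
move=> vV e'v e'E; rewrite /mult; case: pickP => [e'' /andP[/eqP e''v e''E]|none].
  exact: Hharm.
by move: (none e'); rewrite e'v eqxx e'E.
Qed.

Lemma isPL_comp (g : gX Gm' -> G) : isPL g -> isPL (g \o phi).
Proof.
move=> PLg e eE /=; case: Hphi => _ /(_ e eE) [phiE phiV].
have [phieV|phieE] := boolP (isV (phi e)).
  by have [-> ->] := phiV phieV; exists 0; rewrite subrr mulr0z.
have [-> -> [k lE]] := phiE phieE; have [k' gE] := PLg _ phieE.
by exists (k * k'); rewrite gE lE mulrzA.
Qed.

Lemma outslope_comp (g : gX Gm' -> G) e : isPL g -> ~~ isV e ->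
  outslope (g \o phi) e = outslope g (phi e) * slope phi e.
Proof.
move=> PLg eE; case: Hphi => _ /(_ e eE) [phiE phiV].
rewrite /outslope /slope /=; have [phieV|phieE] := boolP (isV (phi e)).
  have [-> ->] := phiV phieV; rewrite mulr0.
  by apply: (qdiv_gl HM HGm eE); rewrite subrr mulr0z.
have [-> -> [k lE]] := phiE phieE; have [k' gE] := PLg _ phieE.
rewrite (qdiv_gl HM HGm' phieE gE) (qdiv_gl HM HGm eE lE).
by apply: (qdiv_gl HM HGm eE); rewrite gE lE -mulrzA mulrC.
Qed.

(* Group the half-edges at [x] by their images at [phi x]; harmonicity makes each
   group contribute [mult phi x] times the slope along the image. *)
Lemma Lap_comp (g : gX Gm' -> G) x : isPL g ->
  Lap (g \o phi) x = pullback phi (Lap g) x.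
Proof.
move=> PLg; rewrite /pullback !LapE; have [xV|//] := boolP (isV x).
rewrite (isV_phi xV) (bigID (fun e => isV (phi e))) /= big1 ?add0r; last first.
  by move=> e /andP[/andP[_ eE] phieV]; rewrite outslope_comp // /slope phieV mulr0.
rewrite (eq_bigr (fun e => outslope g (phi e) * slope phi e)); last first.
  by move=> e /andP[/andP[_ eE] _]; apply: outslope_comp.
rewrite (partition_big phi (fun e' => (gr Gm' e' == phi x) && ~~ isV e')) /=; last first.
  move=> e /andP[/andP[/eqP ex eE] phieE].
  case: Hphi => _ /(_ e eE) [/(_ phieE) [phi_gr _ _] _].
  by rewrite -phi_gr ex eqxx phieE.
rewrite mulr_suml; apply: eq_bigr => e' /andP[/eqP e'x e'E].
rewrite (mult_mloc xV e'x e'E) /mloc mulr_sumr.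
apply: eq_big => [e|e /andP[_ /eqP ->] //].
by case: (phi e =P e') => [->|]; rewrite ?e'E ?andbT ?andbF.
Qed.

Lemma pullbackB (A B : gX Gm' -> int) x :
  pullback phi (fun y => A y - B y) x = pullback phi A x - pullback phi B x.
Proof. by rewrite /pullback; case: ifP; rewrite ?subr0 ?mulrBl. Qed.

Lemma pullback_ge0 (D' : gX Gm' -> int) : effective D' -> effective (pullback phi D').
Proof.
move=> D'_ge0 x; rewrite /pullback; case: ifP => // xV.
by rewrite mulr_ge0 // ltW // Hnd.
Qed.

Lemma linsys_pullback (D' : gX Gm' -> int) :
  linsys_nonempty D' -> linsys_nonempty (pullback phi D').
Proof.
case=> E' [_ E'_ge0 [g [PLg E'D'E]]].
exists (pullback phi E'); split.
- by move=> x xE; rewrite /pullback (negbTE xE).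
- exact: pullback_ge0.
exists (g \o phi); split=> [|x]; first exact: isPL_comp.
rewrite Lap_comp // -pullbackB /pullback.
by case: ifP => // _; rewrite E'D'E.
Qed.

Lemma isDiv_pushforward (F : gX Gm -> int) : isDiv (pushforward phi F).
Proof. by move=> y yE; rewrite /pushforward (negbTE yE). Qed.

Lemma pushforward_ge0 (F : gX Gm -> int) : effective F -> effective (pushforward phi F).
Proof.
by move=> F_ge0 y; rewrite /pushforward; case: ifP => // _; apply: sumr_ge0.
Qed.

Lemma degree_pushforward (F : gX Gm -> int) : degree (pushforward phi F) = degree F.
Proof.
rewrite /degree [RHS](partition_big phi (fun y : gX Gm' => isV y)) /=;
  last by move=> x; apply: isV_phi.
by apply: eq_bigr => y yV; rewrite /pushforward yV.
Qed.

Lemma le_pullback_pushforward (F : gX Gm -> int) x :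
  effective F -> isV x -> F x <= pullback phi (pushforward phi F) x.
Proof.
move=> F_ge0 xV; rewrite /pullback /pushforward xV (isV_phi xV).
have Fx_le : F x <= \sum_(x' | isV x' && (phi x' == phi x)) F x'.
  by rewrite (bigD1 x) ?xV ?eqxx //= lerDl sumr_ge0.
apply: (le_trans Fx_le); rewrite ler_peMr ?sumr_ge0 //.
exact: Hnd.
Qed.

Lemma rank_ok_pullback (D' : gX Gm' -> int) k :
  rank_ok D' k -> rank_ok (pullback phi D') k.
Proof.
move=> D'k F Fdiv F_ge0 degF.
have /D'k/linsys_pullback : degree (pushforward phi F) = k by rewrite degree_pushforward.
move=> /(_ (isDiv_pushforward F) (pushforward_ge0 F_ge0)).
apply: linsys_nonempty_le => x; rewrite pullbackB; last first.
  by move=> xE; rewrite /pullback (negbTE xE) Fdiv.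
have [xV|xE] := boolP (isV x); first by rewrite lerD2l lerN2 le_pullback_pushforward.
by rewrite /pullback (negbTE xE) Fdiv.
Qed.

End Pullback.

Unset Implicit Arguments.

Theorem lemma3p7 (G : zmodType) (M : G -> Prop)
  (HM : sharp_integral_monoid M)
  (Gm Gm' : mgraph G) (HGm : Mmetrised M Gm) (HGm' : Mmetrised M Gm')
  (phi : gX Gm -> gX Gm') (Hphi : is_morphism phi)
  (Hharm : harmonic phi) (Hnd : non_degenerate phi)
  (D' : gX Gm' -> int) (HD'div : isDiv D') (HD'eff : effective D') :
  exists n n' : int,
    [/\ is_rank (pullback phi D') n, is_rank D' n' & n' <= n].
Proof.
have [n rank_n] := rank_exists HM HGm (pullback phi D').
have [n' rank_n'] := rank_exists HM HGm' D'.
exists n, n'; split=> //; apply: rank_n.2.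
exact: (rank_ok_pullback HM HGm HGm' Hphi Hharm Hnd rank_n'.1).
Qed.
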